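(* Let $Y=C\big([B_{r-1},[B_r,[F_X^+,B_{\tau(r)}]_q]_q]_q+qc_{\tau(r)}B_{r-1}L_rK_X^{-1}\big)$ (the image of $B_{r-1}$ under $\widetilde\tau_r$). Then $YF_{r+1}-F_{r+1}Y=0$ and $YF_{n-r}-F_{n-r}Y=0$ hold in $B_{\mathbf c}$.
   Context: Let $\mathbb K$ be a field of characteristic zero, $q$ an indeterminate, $\mathbb K'$ a field extension of $\mathbb K(q^{1/2})$ containing square roots of all parameters $c_i$ below; all algebras are over $\mathbb K'$. $n\ge1$, $I=\{1,\dots,n\}$, $\mathfrak g=\mathfrak{sl}_{n+1}(\mathbb C)$, simple roots $\alpha_i$, fundamental weights $\varpi_i$, weight lattice $P$, Cartan matrix $a_{ii}=2$, $a_{ij}=-1$ if $|i-j|=1$, else $0$, form $(\alpha_i,\alpha_j)=a_{ij}$, $(\alpha_i,\varpi_j)=\delta_{ij}$. $U_q(\mathfrak g)$ is generated by $E_i,F_i,K_\mu$ ($\mu\in P$) with $K_0=1$, $K_\mu K_\lambda=K_{\mu+\lambda}$, $K_\mu E_i=q^{(\alpha_i,\mu)}E_iK_\mu$, $K_\mu F_i=q^{-(\alpha_i,\mu)}F_iK_\mu$, $E_iF_j-F_jE_i=\delta_{ij}\frac{K_i-K_i^{-1}}{q-q^{-1}}$ ($K_i=K_{\alpha_i}$), and the quantum Serre relations. $[a,b]_c=ab-cba$. Fix $r$ with $2\le r\le\lceil n/2\rceil-1$, $X=\{r+1,\dots,n-r\}$, $\tau(i)=n-i+1$ (on weights $\varpi_i\mapsto\varpi_{\tau(i)}$).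 $E_X^+=[E_{r+1},[\dots,[E_{n-r-1},E_{n-r}]_{q^{-1}}\dots]_{q^{-1}}]_{q^{-1}}$, $E_X^-=[E_{n-r},[\dots,[E_{r+2},E_{r+1}]_{q^{-1}}\dots]_{q^{-1}}]_{q^{-1}}$, $F_X^+=[F_{r+1},[\dots,[F_{n-r-1},F_{n-r}]_q\dots]_q]_q$ (equal to $E_{r+1}$, $F_{r+1}$ if $|X|=1$); $K_X=K_{r+1}\cdots K_{n-r}$; $L_i=K_iK_{\tau(i)}^{-1}$. $\mathcal M_X$ is generated by $E_j,F_j,K_j^{\pm1}$ ($j\in X$); $U^0_\Theta$ by the $K_\mu$ with $-w_X\tau(\mu)=\mu$ ($w_X$ longest element of the parabolic Weyl subgroup for $X$). Parameters $c_i\in\mathbb K(q^{1/2})^\times$ ($i\in I\setminus X$) with $c_i=c_{\tau(i)}$ for $i\notin X\cup\{r,\tau(r)\}$. $B_i=F_i-c_iE_{\tau(i)}K_i^{-1}$ for $i\in I\setminus(X\cup\{r,\tau(r)\})$, $B_r=F_r-c_r[E_X^+,E_{\tau(r)}]_{q^{-1}}K_r^{-1}$, $B_{\tau(r)}=F_{\tau(r)}-c_{\tau(r)}[E_X^-,E_r]_{q^{-1}}K_{\tau(r)}^{-1}$; $B_{\mathbf c}$ is generated by $\mathcal M_X$, $U^0_\Theta$ and the $B_i$. $C=(qc_rc_{\tau(r)})^{-1/2}$. *)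

From HB Require Import structures.
From mathcomp Require Import all_boot all_order all_algebra.
Set Implicit Arguments. Unset Strict Implicit. Unset Printing Implicit Defensive.
Import Order.TTheory GRing.Theory Num.Theory.
Local Open Scope ring_scope.

(* Weights of sl_{n+1}: P = (+)_{j=1..n} Z varpi_j, represented by the
   coefficient vector mu : {ffun 'I_n -> int}, where mu j is the coefficient
   of varpi_{j+1}.  Simple roots are indexed by nat i in 1..n. *)
Definition weight (n : nat) := {ffun 'I_n -> int}.

Definition cartan (i j : nat) : int :=
  if i == j then 2 else if (i == j.+1) || (j == i.+1) then -1 else 0.

Definition alpha (n i : nat) : weight n := [ffun j : 'I_n => cartan i j.+1].

(* (alpha_i, mu) for mu in P, using (alpha_i, varpi_j) = delta_ij *)
Definition pair_alpha (n i : nat) (mu : weight n) : int :=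
  \sum_(j < n) (if i == j.+1 then mu j else 0).

Definition qbr (F : fieldType) (A : algType F) (c : F) (a b : A) : A :=
  a * b - c *: (b * a).

Fixpoint nestbr (F : fieldType) (A : algType F) (c : F) (s : seq A) : A :=
  match s with
  | [::] => 0
  | [:: x] => x
  | x :: s' => qbr c x (nestbr c s')
  end.

(* Defining relations of U_q(sl_{n+1}) for a family (E_i, F_i, K_mu) in a
   F-algebra A.  E i, Fm i for i in 1..n (values outside are irrelevant). *)
Definition Uq_relations (n : nat) (F : fieldType) (q : F) (A : algType F)
  (E Fm : nat -> A) (K : weight n -> A) : Prop :=
  K 0 = 1 /\
  (forall mu la, K mu * K la = K (mu + la)) /\
  (forall mu i, (1 <= i <= n)%N ->
      K mu * E i = (q ^ pair_alpha i mu) *: (E i * K mu)) /\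
  (forall mu i, (1 <= i <= n)%N ->
      K mu * Fm i = (q ^ (- pair_alpha i mu)) *: (Fm i * K mu)) /\
  (forall i j, (1 <= i <= n)%N -> (1 <= j <= n)%N ->
      E i * Fm j - Fm j * E i =
      (if i == j then (q - q^-1)^-1 *: (K (alpha n i) - K (- alpha n i))
       else 0)) /\
  (forall i j, (1 <= i <= n)%N -> (1 <= j <= n)%N ->
      ((i == j.+1) || (j == i.+1)) ->
      E i * E i * E j - (q + q^-1) *: (E i * E j * E i) + E j * E i * E i = 0
      /\ Fm i * Fm i * Fm j - (q + q^-1) *: (Fm i * Fm j * Fm i)
         + Fm j * Fm i * Fm i = 0) /\
  (forall i j, (1 <= i <= n)%N -> (1 <= j <= n)%N ->
      (i != j) -> ~~ ((i == j.+1) || (j == i.+1)) ->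
      E i * E j = E j * E i /\ Fm i * Fm j = Fm j * Fm i).

(* x lies in the subfield K(s) of F, K embedded via iota *)
Definition in_adjoin (K F : fieldType) (iota : {rmorphism K -> F}) (s x : F) : Prop :=
  exists a b : {poly K}, (map_poly iota b).[s] != 0 /\
    x = (map_poly iota a).[s] / (map_poly iota b).[s].

Section Gens.
Variables (n r : nat) (F : fieldType) (q : F) (A : algType F)
  (E Fm : nat -> A) (K : weight n -> A) (c : nat -> F).

Definition tau (i : nat) : nat := (n - i).+1.
Definition Kinv (i : nat) : A := K (- alpha n i).
Definition Xlist : seq nat := iota r.+1 (n - r - r).
Definition EXp : A := nestbr q^-1 (map E Xlist).
Definition EXm : A := nestbr q^-1 (map E (rev Xlist)).
Definition FXp : A := nestbr q (map Fm Xlist).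
Definition KXinv : A := K (- \sum_(j <- Xlist) alpha n j).
Definition Lr : A := K (alpha n r - alpha n (tau r)).
(* B_i for i not in X u {r, tau r} *)
Definition Bgen (i : nat) : A := Fm i - c i *: (E (tau i) * Kinv i).
Definition Br : A := Fm r - c r *: (qbr q^-1 EXp (E (tau r)) * Kinv r).
Definition Btr : A :=
  Fm (tau r) - c (tau r) *: (qbr q^-1 EXm (E r) * Kinv (tau r)).
Definition Yelt (C : F) : A :=
  C *: (qbr q (Bgen r.-1) (qbr q Br (qbr q FXp Btr))
        + (q * c (tau r)) *: (Bgen r.-1 * Lr * KXinv)).
End Gens.

From HB Require Import structures.
From mathcomp Require Import all_boot all_order all_algebra.
From mathcomp Require Import zify ring.
Import GRing.Theory.
Set Implicit Arguments. Unset Strict Implicit. Unset Printing Implicit Defensive.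
Local Open Scope ring_scope.

(* Write a = r and b = tau(r) = a + m + 2, so that X = {a+1, ..., a+m+1},
   and let P = [E_X^+, E_b]_{q^-1} and Q = [E_X^-, E_a]_{q^-1}.  Expanding
   Z = [B_a, [F_X^+, B_b]_q]_q bilinearly gives four brackets, with F_a or
   P K_a^-1 on the left and F_b or Q K_b^-1 on the right.  The generator
   B_{a-1} commutes with F_{a+1} and with F_{a+m+1}.  For F_{a+m+1} (when
   m >= 1) each of the four brackets commutes as well.  For F_{a+1} the
   bracket with Q leaves the defect q c_b F_{a+1} K_a K_X^-1 K_b^-1, which is
   exactly cancelled by the correction term q c_b B_{a-1} L_r K_X^-1 of Y;
   the bracket of P with F_b leaves a defect V with B_{a-1} V = q V B_{a-1},
   which the outer q-bracket with B_{a-1} kills. *)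

Section NCRewrite.
Variables (F : fieldType) (A : algType F).

Inductive ncterm := NCatom of nat | NCzero | NCone | NCadd of ncterm & ncterm
  | NCopp of ncterm | NCscale of F & ncterm | NCmul of ncterm & ncterm.

Variable env : seq A.
Definition atom i := nth 0 env i.

Fixpoint nc_eval (e : ncterm) : A :=
  match e with
  | NCatom i => atom i | NCzero => 0 | NCone => 1
  | NCadd a b => nc_eval a + nc_eval b | NCopp a => - nc_eval a
  | NCscale k a => k *: nc_eval a | NCmul a b => nc_eval a * nc_eval b end.

Fixpoint word_eval_acc (acc : A) (w : seq nat) : A :=
  match w with [::] => acc | j :: w' => word_eval_acc (acc * atom j) w' end.
Definition word_eval (w : seq nat) : A :=
  match w with [::] => 1 | i :: w' => word_eval_acc (atom i) w' end.

Lemma word_eval_accE acc w : word_eval_acc acc w = acc * word_eval w.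
Proof.
elim: w acc => [|j w IH] acc /=; first by rewrite mulr1.
by rewrite !IH mulrA.
Qed.

Lemma word_eval_cons i w : word_eval (i :: w) = atom i * word_eval w.
Proof. by rewrite /= word_eval_accE. Qed.

Lemma word_eval_cat u v : word_eval (u ++ v) = word_eval u * word_eval v.
Proof.
elim: u => [|i u IH]; first by rewrite mul1r.
by rewrite cat_cons !word_eval_cons IH mulrA.
Qed.

Definition monomial := (F * seq nat)%type.

Fixpoint ncpoly_eval (p : seq monomial) : A :=
  match p with [::] => 0 | m :: p' => m.1 *: word_eval m.2 + ncpoly_eval p' end.

Lemma ncpoly_eval_cat p1 p2 : ncpoly_eval (p1 ++ p2) = ncpoly_eval p1 + ncpoly_eval p2.
Proof. by elim: p1 => [|m p IH] /=; rewrite ?add0r // IH addrA. Qed.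

Fixpoint ncpoly_scale (k : F) (p : seq monomial) : seq monomial :=
  match p with [::] => [::] | m :: p' => (k * m.1, m.2) :: ncpoly_scale k p' end.

Lemma ncpoly_eval_scale k p : ncpoly_eval (ncpoly_scale k p) = k *: ncpoly_eval p.
Proof. by elim: p => [|m p IH] /=; rewrite ?scaler0 // IH scalerDr scalerA. Qed.

Fixpoint ncpoly_mulm (m : monomial) (p : seq monomial) : seq monomial :=
  match p with
  | [::] => [::]
  | m' :: p' => (m.1 * m'.1, m.2 ++ m'.2) :: ncpoly_mulm m p' end.

Lemma ncpoly_eval_mulm m p :
  ncpoly_eval (ncpoly_mulm m p) = m.1 *: word_eval m.2 * ncpoly_eval p.
Proof.
elim: p => [|m' p IH] /=; first by rewrite mulr0.
rewrite IH mulrDr word_eval_cat; congr (_ + _).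
by rewrite -scalerAl -scalerAr scalerA.
Qed.

Fixpoint ncpoly_mul (p1 p2 : seq monomial) : seq monomial :=
  match p1 with [::] => [::] | m :: p1' => ncpoly_mulm m p2 ++ ncpoly_mul p1' p2 end.

Lemma ncpoly_eval_mul p1 p2 :
  ncpoly_eval (ncpoly_mul p1 p2) = ncpoly_eval p1 * ncpoly_eval p2.
Proof.
elim: p1 => [|m p IH] /=; first by rewrite mul0r.
by rewrite ncpoly_eval_cat IH ncpoly_eval_mulm mulrDl.
Qed.

Fixpoint ncterm_expand (e : ncterm) : seq monomial :=
  match e with
  | NCatom i => [:: (1, [:: i])] | NCzero => [::] | NCone => [:: (1, [::])]
  | NCadd a b => ncterm_expand a ++ ncterm_expand b
  | NCopp a => ncpoly_scale (-1) (ncterm_expand a)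
  | NCscale k a => ncpoly_scale k (ncterm_expand a)
  | NCmul a b => ncpoly_mul (ncterm_expand a) (ncterm_expand b) end.

Lemma ncterm_expandE e : ncpoly_eval (ncterm_expand e) = nc_eval e.
Proof.
elim: e => [i| | |a IHa b IHb|a IHa|k a IHa|a IHa b IHb] /=.
- by rewrite scale1r addr0 /atom.
- by [].
- by rewrite scale1r addr0.
- by rewrite ncpoly_eval_cat IHa IHb.
- by rewrite ncpoly_eval_scale IHa scaleN1r.
- by rewrite ncpoly_eval_scale IHa.
- by rewrite ncpoly_eval_mul IHa IHb.
Qed.

(* Words are compared with [Nat.eqb] rather than [==] so that the whole
   procedure reduces under a [cbv] restricted to the functions below. *)
Fixpoint word_prefix (l w : seq nat) : option (seq nat) :=
  match l, w with
  | [::], _ => Some w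
  | i :: l', j :: w' => if Nat.eqb i j then word_prefix l' w' else None
  | _, _ => None end.

Lemma word_prefixP l w v : word_prefix l w = Some v -> w = l ++ v.
Proof.
elim: l w => [|i l IH] w /=; first by case=> <-.
case: w => [|j w] //=.
by case: PeanoNat.Nat.eqb_spec => // -> /IH ->.
Qed.

Fixpoint word_split (l w : seq nat) : option (seq nat * seq nat) :=
  match word_prefix l w with
  | Some v => Some ([::], v)
  | None => match w with
            | [::] => None
            | j :: w' =>
              match word_split l w' with Some (u, v) => Some (j :: u, v) | None => None end
            end end.

Lemma word_splitP l w u v : word_split l w = Some (u, v) -> w = u ++ l ++ v.
Proof.
elim: w u v => [|j w IH] u v /=.
  case E: (word_prefix l [::]) => [v'|] //= [<- <-]; exact: word_prefixP E.
case E: (word_prefix l (j :: w)) => [v'|] /=.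
  by case=> <- <-; exact: word_prefixP E.
case E2: (word_split l w) => [[u' v']|] // [<- <-].
by rewrite (IH _ _ E2).
Qed.

Definition rule := (seq nat * ncterm)%type.

Fixpoint valid_rules (rs : seq rule) : Prop :=
  match rs with
  | [::] => True
  | r :: rs' => word_eval r.1 = nc_eval r.2 /\ valid_rules rs' end.

Fixpoint ncpoly_subst (k : F) (u v : seq nat) (p : seq monomial) : seq monomial :=
  match p with
  | [::] => [::]
  | m :: p' => (k * m.1, u ++ m.2 ++ v) :: ncpoly_subst k u v p' end.

Lemma ncpoly_eval_subst k u v p :
  ncpoly_eval (ncpoly_subst k u v p) = k *: (word_eval u * ncpoly_eval p * word_eval v).
Proof.
elim: p => [|m p IH] /=; first by rewrite mulr0 mul0r scaler0.
rewrite IH !word_eval_cat mulrDr mulrDl scalerDr; congr (_ + _).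
by rewrite -scalerA -scalerAr -scalerAl mulrA.
Qed.

Fixpoint rewrite_monomial (rs : seq rule) (m : monomial) : option (seq monomial) :=
  match rs with
  | [::] => None
  | r :: rs' => match word_split r.1 m.2 with
                | Some (u, v) => Some (ncpoly_subst m.1 u v (ncterm_expand r.2))
                | None => rewrite_monomial rs' m end end.

Lemma rewrite_monomialP rs m p : valid_rules rs ->
  rewrite_monomial rs m = Some p -> ncpoly_eval p = m.1 *: word_eval m.2.
Proof.
elim: rs => [|r rs IH] //= [hr hv].
case E: (word_split r.1 m.2) => [[u v]|]; last exact: IH.
case=> <-; rewrite ncpoly_eval_subst ncterm_expandE -hr.
by rewrite [in RHS](word_splitP E) !word_eval_cat mulrA.
Qed.

Fixpoint rewrite_step (rs : seq rule) (p : seq monomial) : seq monomial :=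
  match p with
  | [::] => [::]
  | m :: p' => match rewrite_monomial rs m with
               | Some p1 => p1 ++ rewrite_step rs p'
               | None => m :: rewrite_step rs p' end end.

Lemma rewrite_stepP rs p : valid_rules rs -> ncpoly_eval (rewrite_step rs p) = ncpoly_eval p.
Proof.
move=> hv; elim: p => [|m p IH] //=.
case E: (rewrite_monomial rs m) => [p1|] /=; last by rewrite IH.
by rewrite ncpoly_eval_cat IH (rewrite_monomialP hv E).
Qed.

Fixpoint rewrite_iter (fuel : nat) rs p :=
  match fuel with 0 => p | fuel'.+1 => rewrite_iter fuel' rs (rewrite_step rs p) end.

Lemma rewrite_iterP fuel rs p :
  valid_rules rs -> ncpoly_eval (rewrite_iter fuel rs p) = ncpoly_eval p.
Proof. by move=> hv; elim: fuel p => [|fuel IH] p //=; rewrite IH rewrite_stepP. Qed.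

Fixpoint word_eqb (u v : seq nat) : bool :=
  match u, v with
  | [::], [::] => true
  | i :: u', j :: v' => Nat.eqb i j && word_eqb u' v'
  | _, _ => false end.

Lemma word_eqbP u v : word_eqb u v -> u = v.
Proof.
elim: u v => [|i u IH] [|j v] //= /andP[].
by case: PeanoNat.Nat.eqb_spec => // -> _ /IH ->.
Qed.

Fixpoint ncpoly_insert (m : monomial) (acc : seq monomial) : seq monomial :=
  match acc with
  | [::] => [:: m]
  | m' :: acc' => if word_eqb m.2 m'.2 then (m'.1 + m.1, m'.2) :: acc'
                  else m' :: ncpoly_insert m acc' end.

Lemma ncpoly_eval_insert m acc :
  ncpoly_eval (ncpoly_insert m acc) = m.1 *: word_eval m.2 + ncpoly_eval acc.
Proof.
elim: acc => [|m' acc IH] //=.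
case: ifP => [/word_eqbP ->|_] /=; last by rewrite IH addrCA.
by rewrite scalerDl addrA [_ *: _ + _]addrC.
Qed.

Fixpoint ncpoly_collect (p acc : seq monomial) : seq monomial :=
  match p with [::] => acc | m :: p' => ncpoly_collect p' (ncpoly_insert m acc) end.

Lemma ncpoly_eval_collect p acc :
  ncpoly_eval (ncpoly_collect p acc) = ncpoly_eval p + ncpoly_eval acc.
Proof.
elim: p acc => [|m p IH] acc /=; first by rewrite add0r.
by rewrite IH ncpoly_eval_insert addrCA addrA.
Qed.

Fixpoint all_coef0 (p : seq monomial) : Prop :=
  match p with [::] => True | m :: p' => m.1 = 0 /\ all_coef0 p' end.

Lemma all_coef0P p : all_coef0 p -> ncpoly_eval p = 0.
Proof. by elim: p => [|m p IH] //= [-> /IH ->]; rewrite scale0r addr0. Qed.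

Lemma nc_rewrite_sound fuel rs e1 e2 : valid_rules rs ->
  all_coef0 (ncpoly_collect (rewrite_iter fuel rs (ncterm_expand (NCadd e1 (NCopp e2)))) [::]) ->
  nc_eval e1 = nc_eval e2.
Proof.
move=> hv /all_coef0P; rewrite ncpoly_eval_collect addr0 rewrite_iterP //.
by rewrite ncterm_expandE /= => /eqP; rewrite subr_eq0 => /eqP.
Qed.
End NCRewrite.

Ltac nc_index x l := lazymatch l with
  | cons ?y ?l' =>
    let b := constr:(ltac:(first [unify x y; exact true | exact false]) : bool) in
    lazymatch b with
    | true => constr:(0%N)
    | false => let k := nc_index x l' in constr:(k.+1) end end.

Ltac nc_mem x l := lazymatch l with
  | nil => constr:(false)
  | cons ?y ?l' =>
    let b := constr:(ltac:(first [unify x y; exact true | exact false]) : bool) in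
    lazymatch b with
    | true => constr:(true)
    | false => nc_mem x l' end end.

Ltac nc_atoms t env := lazymatch t with
  | GRing.add ?a ?b => let env1 := nc_atoms a env in nc_atoms b env1
  | GRing.mul ?a ?b => let env1 := nc_atoms a env in nc_atoms b env1
  | GRing.opp ?a => nc_atoms a env
  | GRing.scale ?k ?a => nc_atoms a env
  | GRing.zero => env
  | GRing.one => env
  | _ => let b := nc_mem t env in
         lazymatch b with true => env | false => constr:(t :: env) end
  end.

Ltac nc_reify F t env := lazymatch t with
  | GRing.add ?a ?b =>
    let ea := nc_reify F a env in let eb := nc_reify F b env in constr:(@NCadd F ea eb)
  | GRing.mul ?a ?b =>
    let ea := nc_reify F a env in let eb := nc_reify F b env in constr:(@NCmul F ea eb)
  | GRing.opp ?a => let ea := nc_reify F a env in constr:(@NCopp F ea)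
  | GRing.scale ?k ?a => let ea := nc_reify F a env in constr:(@NCscale F k ea)
  | GRing.zero => constr:(@NCzero F)
  | GRing.one => constr:(@NCone F)
  | _ => let i := nc_index t env in constr:(@NCatom F i)
  end.

Ltac nc_word t env := lazymatch t with
  | GRing.mul ?a ?b =>
    let wa := nc_word a env in let i := nc_index b env in constr:(wa ++ [:: i])
  | _ => let i := nc_index t env in constr:([:: i])
  end.

Ltac nc_env G env := lazymatch G with
  | (@eq _ ?l ?r) -> ?G' =>
    let env1 := nc_atoms l env in let env2 := nc_atoms r env1 in nc_env G' env2
  | @eq _ ?l ?r => let env1 := nc_atoms l env in nc_atoms r env1
  end.

Ltac nc_rules F G env := lazymatch G with
  | (@eq _ ?l ?r) -> ?G' =>
    let w := nc_word l env in let er := nc_reify F r env in let rs := nc_rules F G' env in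
    constr:((w, er) :: rs)
  | _ => constr:(@nil (rule F))
  end.

Ltac nc_concl G := lazymatch G with _ -> ?G' => nc_concl G' | _ => G end.

(* [nc_solve] proves a goal [H1 -> ... -> Hk -> l = r] in an algebra.  Each
   [Hi] must read [w = t] with [w] a left-nested product of atoms and is used
   as the rewrite rule [w ~> t] on words; after 40 rounds of rewriting, the
   coefficients of [l - r] are collected and each is closed by [field], whose
   side conditions are looked up among the hypotheses. *)
Ltac nc_solve :=
  lazymatch goal with |- ?G =>
  let C := nc_concl G in
  lazymatch C with @eq ?T ?l ?r =>
    let F := open_constr:(_ : fieldType) in
    let A := open_constr:(_ : algType F) in
    unify T (GRing.Algebra.sort A);
    let env := nc_env G (@nil T) in
    let rs := nc_rules F G env in
    let el := nc_reify F l env in let er := nc_reify F r env in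
    intros;
    change (nc_eval env el = nc_eval env er);
    apply: (@nc_rewrite_sound F A env 40%N rs el er);
    [ cbv [valid_rules]; repeat (first [exact I | split | assumption])
    | cbv [all_coef0 ncpoly_collect ncpoly_insert word_eqb rewrite_iter rewrite_step
           rewrite_monomial word_split word_prefix ncpoly_subst ncterm_expand
           ncpoly_scale ncpoly_mul ncpoly_mulm cat fst snd Nat.eqb andb];
      repeat split; field; try (repeat (apply/andP; split); assumption); try done ]
  end end.

Definition cm (R : pzRingType) (x y : R) := x * y - y * x.

Lemma cm_eq0 (R : pzRingType) (x y : R) : cm x y = 0 -> x * y = y * x.
Proof. by move/eqP; rewrite subr_eq0 => /eqP. Qed.

Lemma cm_eq (R : pzRingType) (x y z : R) : cm x y = z -> x * y = y * x + z.
Proof. by move=> <-; rewrite addrC subrK. Qed.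

Lemma qbr0l (F : fieldType) (A : algType F) c (y : A) : qbr c 0 y = 0.
Proof. by rewrite /qbr mul0r mulr0 scaler0 subr0. Qed.

Lemma qbr0r (F : fieldType) (A : algType F) c (y : A) : qbr c y 0 = 0.
Proof. by rewrite /qbr mul0r mulr0 scaler0 subr0. Qed.

Lemma addr_subr_eq0 (R : pzRingType) (x y z : R) : x - y + z = 0 -> x = y - z.
Proof. by move=> h; apply/eqP; rewrite -subr_eq0 -h opprB addrA addrAC. Qed.

Lemma cartanC i j : cartan i j = cartan j i.
Proof. by rewrite /cartan; repeat case: ifP => /= ?; try lia. Qed.

Definition cartan_sum (s i l : nat) : int := \sum_(t <- iota i l) cartan s t.

Lemma cartan_sumE s i l : cartan_sum s i l =
  (if (i <= s < i + l)%N then 2 else 0) - (if (i <= s.+1 < i + l)%N then 1 else 0)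
  - (if [&& 0 < s, i <= s.-1 & s.-1 < i + l]%N then 1 else 0).
Proof.
rewrite /cartan_sum; elim: l => [|l IH].
  by rewrite big_nil addn0; case: ifP => h1; case: ifP => h2; case: ifP => h3 //; lia.
by rewrite -addn1 iotaD big_cat big_seq1 IH /cartan; repeat case: ifP => /= ?; try lia.
Qed.

Lemma iotaSr (i l : nat) : iota i l.+1 = iota i l ++ [:: (i + l)%N].
Proof. by rewrite -addn1 iotaD. Qed.

Lemma cartan_sum_chain i l : \sum_(t <- iota i l.+1) cartan_sum t i l.+1 = 2.
Proof.
elim: l => [|l IH]; first by rewrite big_seq1 cartan_sumE; repeat case: ifP => /= ?; lia.
have hs t : cartan_sum t i l.+2 = cartan_sum t i l.+1 + cartan t (i + l.+1).
  by rewrite /cartan_sum (iotaSr i l.+1) big_cat big_seq1.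
rewrite (eq_bigr _ (fun t _ => hs t)) big_split (iotaSr i l.+1) big_cat big_seq1 IH -iotaSr.
have -> : \sum_(t <- iota i l.+2) cartan t (i + l.+1) = cartan_sum (i + l.+1) i l.+2.
  by rewrite /cartan_sum; apply: eq_bigr => t _; rewrite cartanC.
by rewrite !cartan_sumE; repeat case: ifP => /= ?; try lia.
Qed.

Section Uq.
Variables (F : fieldType) (q : F) (A : algType F).
Hypotheses (hq : q != 0) (hqq : q * q - 1 != 0) (hqp : q * q + 1 != 0).
Local Notation k := ((q - q^-1)^-1).

Lemma qbr_assoc c (x y z : A) : x * z = z * x -> qbr c (qbr c x y) z = qbr c x (qbr c y z).
Proof. by rewrite /qbr; nc_solve. Qed.

Lemma comm_qbr c (x y z : A) : x * y = y * x -> x * z = z * x -> x * qbr c y z = qbr c y z * x.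
Proof. by rewrite /qbr; nc_solve. Qed.

Lemma comm_nestbr c (x : A) (f : nat -> A) s :
  (forall t, t \in s -> x * f t = f t * x) -> x * nestbr c (map f s) = nestbr c (map f s) * x.
Proof.
elim: s => [|t s IH] h /=; first by rewrite mulr0 mul0r.
case: s IH h => [|t' s] IH h /=; first by apply: h; rewrite mem_seq1.
apply: comm_qbr; first by apply: h; rewrite mem_head.
by apply: IH => u hu; apply: h; rewrite in_cons hu orbT.
Qed.

Lemma cm_qbr c (x y z : A) : cm (qbr c x y) z = qbr c (cm x z) y + qbr c x (cm y z).
Proof. by rewrite /cm /qbr; nc_solve. Qed.

Lemma qbrV_eq (x y z : A) : qbr q^-1 x y = z -> y * x = q *: (x * y) - q *: z.
Proof. by rewrite /qbr => <-; rewrite scalerBr scalerA mulfV // scale1r opprB addrC subrK. Qed.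

Lemma scale_qV_eq (x y : A) : x * y = q^-1 *: (y * x) -> y * x = q *: (x * y).
Proof. by move=> ->; rewrite scalerA mulfV // scale1r. Qed.

Lemma serre_middle (x y : A) : x * x * y = (q + q^-1) *: (x * y * x) - y * x * x ->
  x * y * x = (q + q^-1)^-1 *: (x * x * y + y * x * x).
Proof.
move=> h; rewrite h subrK scalerA mulVf ?scale1r //.
have -> : q + q^-1 = (q * q + 1) / q by field.
by rewrite mulf_neq0 // invr_eq0.
Qed.

Lemma serre_qbr_lift c (x y z : A) : x * x * y = (q + q^-1) *: (x * y * x) - y * x * x ->
  x * z = z * x ->
  x * x * qbr c y z = (q + q^-1) *: (x * qbr c y z * x) - qbr c y z * x * x.
Proof. by rewrite /qbr; nc_solve. Qed.

Lemma serre_qbr (x y : A) : x * x * y = (q + q^-1) *: (x * y * x) - y * x * x ->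
  x * qbr q x y = q^-1 *: (qbr q x y * x).
Proof. by rewrite /qbr; nc_solve. Qed.

Lemma comm_qbr_serre (x y z : A) : y * y * x = (q + q^-1) *: (y * x * y) - x * y * y ->
  y * z * y = (q + q^-1)^-1 *: (y * y * z + z * y * y) -> z * x = x * z ->
  y * qbr q x (qbr q y z) = qbr q x (qbr q y z) * y.
Proof. by rewrite /qbr; nc_solve. Qed.

Lemma cm_qbrV_lowering (e f x kp km : A) : e * f = f * e + k *: (kp - km) -> x * f = f * x ->
  kp * x = q^-1 *: (x * kp) -> km * x = q *: (x * km) ->
  cm (qbr q^-1 e x) f = - (x * km).
Proof. by rewrite /cm /qbr; nc_solve. Qed.

Lemma qbrV_lowering0 (e y km : A) : e * y = y * e -> km * e = q *: (e * km) ->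
  qbr q^-1 e (- (y * km)) = 0.
Proof. by rewrite /qbr; nc_solve. Qed.

Lemma comm_qbr_twisted (x f0 f1 y kt : A) : x * f0 = f0 * x -> x * f1 = f1 * x - y * kt ->
  kt * f0 = q^-1 *: (f0 * kt) -> y * f0 = f0 * y ->
  x * qbr q f0 f1 = qbr q f0 f1 * x.
Proof. by rewrite /qbr; nc_solve. Qed.

Lemma comm_qbr2_twisted (x f0 f1 z y kt : A) : x * f0 = f0 * x -> x * f1 = f1 * x - y * kt ->
  x * z = z * x -> kt * z = q^-1 *: (z * kt) -> kt * f0 = q^-1 *: (f0 * kt) ->
  y * f0 = f0 * y -> z * f0 = f0 * z ->
  x * qbr q f0 (qbr q f1 z) = qbr q f0 (qbr q f1 z) * x.
Proof. by rewrite /qbr; nc_solve. Qed.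

Lemma cm_qbrV_qbr (e1 e2 f1 f2 kt kt' ks ks' : A) :
  e1 * f1 = f1 * e1 -> e2 * f2 = f2 * e2 ->
  e1 * f2 = f2 * e1 + k *: (kt - kt') -> e2 * f1 = f1 * e2 + k *: (ks - ks') ->
  kt * e2 = q^-1 *: (e2 * kt) -> kt' * e2 = q *: (e2 * kt') ->
  kt * f1 = q *: (f1 * kt) -> kt' * f1 = q^-1 *: (f1 * kt') ->
  ks * e1 = q^-1 *: (e1 * ks) -> ks' * e1 = q *: (e1 * ks') ->
  ks * f2 = q *: (f2 * ks) -> ks' * f2 = q^-1 *: (f2 * ks') ->
  kt * ks = ks * kt -> kt' * ks = ks * kt' -> kt * ks' = ks' * kt -> kt' * ks' = ks' * kt' ->
  cm (qbr q^-1 e1 e2) (qbr q f1 f2) = k *: (ks * kt - ks' * kt').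
Proof. by rewrite /cm /qbr; nc_solve. Qed.

Variables (n : nat) (E Fm : nat -> A) (K : weight n -> A).
Hypothesis hU : Uq_relations q E Fm K.
Local Notation al := (alpha n).

Lemma K_add mu la : K mu * K la = K (mu + la).
Proof. by case: hU => _ []. Qed.

Lemma K_comm mu la : K mu * K la = K la * K mu.
Proof. by rewrite !K_add addrC. Qed.

Lemma EF_diag i : (1 <= i <= n)%N -> E i * Fm i = Fm i * E i + k *: (K (al i) - K (- al i)).
Proof.
move=> hi; case: hU => _ [] _ [] _ [] _ [] h _.
by move: (h i i hi hi); rewrite eqxx => <-; rewrite addrC subrK.
Qed.

Lemma EF_comm i j : (1 <= i <= n)%N -> (1 <= j <= n)%N -> i != j -> E i * Fm j = Fm j * E i.
Proof.
move=> hi hj hij; case: hU => _ [] _ [] _ [] _ [] h _.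
by move: (h i j hi hj); rewrite (negPf hij) => /eqP; rewrite subr_eq0 => /eqP.
Qed.

Lemma serreF i j : (1 <= i <= n)%N -> (1 <= j <= n)%N -> (i == j.+1) || (j == i.+1) ->
  Fm i * Fm i * Fm j = (q + q^-1) *: (Fm i * Fm j * Fm i) - Fm j * Fm i * Fm i.
Proof.
move=> hi hj hij; apply: addr_subr_eq0.
by case: hU => _ [] _ [] _ [] _ [] _ [] h _; case: (h i j hi hj hij).
Qed.

Lemma EE_comm i j : (1 <= i <= n)%N -> (1 <= j <= n)%N -> (i.+1 < j)%N || (j.+1 < i)%N ->
  E i * E j = E j * E i.
Proof.
move=> hi hj hij; case: hU => _ [] _ [] _ [] _ [] _ [] _ h.
by case: (h i j hi hj) => //; [apply/eqP|apply/negP]; lia.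
Qed.

Lemma FF_comm i j : (1 <= i <= n)%N -> (1 <= j <= n)%N -> (i.+1 < j)%N || (j.+1 < i)%N ->
  Fm i * Fm j = Fm j * Fm i.
Proof.
move=> hi hj hij; case: hU => _ [] _ [] _ [] _ [] _ [] _ h.
by case: (h i j hi hj) => //; [apply/eqP|apply/negP]; lia.
Qed.

Lemma pair_alphaD i (mu la : weight n) :
  pair_alpha i (mu + la) = pair_alpha i mu + pair_alpha i la.
Proof.
rewrite /pair_alpha -big_split /=; apply: eq_bigr => j _.
by rewrite ffunE; case: ifP; rewrite ?addr0.
Qed.

Lemma pair_alphaN i (mu : weight n) : pair_alpha i (- mu) = - pair_alpha i mu.
Proof.
rewrite /pair_alpha -sumrN; apply: eq_bigr => j _.
by rewrite ffunE; case: ifP; rewrite ?oppr0.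
Qed.

Lemma pair_alpha_sum i (s : seq nat) (f : nat -> weight n) :
  pair_alpha i (\sum_(j <- s) f j) = \sum_(j <- s) pair_alpha i (f j).
Proof.
elim: s => [|j s IH]; last by rewrite !big_cons pair_alphaD IH.
by rewrite !big_nil /pair_alpha big1 // => t _; rewrite ffunE; case: ifP.
Qed.

Lemma pair_alpha_root i j : (1 <= i <= n)%N -> pair_alpha i (al j) = cartan j i.
Proof.
move=> /andP[h1 h2]; rewrite /pair_alpha.
have hi : (i.-1 < n)%N by lia.
rewrite (bigD1 (Ordinal hi)) //= big1 ?addr0.
  by rewrite ifT ?ffunE /=; [congr cartan; lia | apply/eqP; lia].
by move=> t /eqP ht; case: ifP => // /eqP hti; case: ht; apply: val_inj => /=; lia.
Qed.

Lemma pair_alpha_chain j i l : (1 <= j <= n)%N ->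
  pair_alpha j (\sum_(t <- iota i l) al t) = cartan_sum j i l.
Proof.
by move=> hj; rewrite pair_alpha_sum /cartan_sum; apply: eq_bigr => t _; rewrite pair_alpha_root // cartanC.
Qed.

Lemma sum_pair_alpha_root s i l : (0 < i)%N -> (i + l <= n.+1)%N ->
  \sum_(t <- iota i l) pair_alpha t (al s) = cartan_sum s i l.
Proof.
move=> hi hl; rewrite /cartan_sum big_seq_cond [RHS]big_seq_cond; apply: eq_bigr => t.
by rewrite andbT mem_iota => ht; apply: pair_alpha_root; lia.
Qed.

Lemma sum_pair_alphaN (mu : weight n) s :
  \sum_(t <- s) pair_alpha t (- mu) = - \sum_(t <- s) pair_alpha t mu.
Proof. by rewrite -sumrN; apply: eq_bigr => t _; exact: pair_alphaN. Qed.

Lemma sum_alpha_iotaSr i l :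
  \sum_(t <- iota i l.+1) al t = \sum_(t <- iota i l) al t + al (i + l).
Proof. by rewrite iotaSr big_cat big_seq1. Qed.

Definition Kcomm (mu : weight n) (x : A) (z : int) := K mu * x = q ^ z *: (x * K mu).

Lemma Kcomm_mul mu x y z1 z2 : Kcomm mu x z1 -> Kcomm mu y z2 -> Kcomm mu (x * y) (z1 + z2).
Proof.
rewrite /Kcomm => h1 h2; rewrite mulrA h1 -scalerAl -[x * K mu * y]mulrA h2 -scalerAr.
by rewrite scalerA expfzDr // mulrA.
Qed.

Lemma Kcomm_add mu x y z : Kcomm mu x z -> Kcomm mu y z -> Kcomm mu (x + y) z.
Proof. by rewrite /Kcomm => h1 h2; rewrite mulrDr h1 h2 mulrDl scalerDr. Qed.

Lemma Kcomm_scale mu x z c : Kcomm mu x z -> Kcomm mu (c *: x) z.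
Proof. by rewrite /Kcomm => h; rewrite -scalerAr h -scalerAl !scalerA mulrC. Qed.

Lemma Kcomm_qbr mu c x y z1 z2 : Kcomm mu x z1 -> Kcomm mu y z2 -> Kcomm mu (qbr c x y) (z1 + z2).
Proof.
move=> h1 h2; rewrite /qbr; apply: Kcomm_add; first exact: Kcomm_mul.
rewrite -scaleN1r scalerA; apply: Kcomm_scale; rewrite addrC; exact: Kcomm_mul.
Qed.

Lemma Kcomm_nestbr mu c (f : nat -> A) (g : nat -> int) s :
  (forall t, t \in s -> Kcomm mu (f t) (g t)) ->
  Kcomm mu (nestbr c (map f s)) (\sum_(t <- s) g t).
Proof.
elim: s => [|t s IH] h /=; first by rewrite big_nil /Kcomm mulr0 mul0r scaler0.
rewrite big_cons; case: s IH h => [|t' s] IH h /=.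
  by rewrite big_nil addr0; apply: h; rewrite mem_seq1.
apply: Kcomm_qbr; first by apply: h; rewrite mem_head.
by apply: IH => u hu; apply: h; rewrite in_cons hu orbT.
Qed.

Lemma Kcomm_E mu i : (1 <= i <= n)%N -> Kcomm mu (E i) (pair_alpha i mu).
Proof. by case: hU => _ [] _ [] h _; apply: h. Qed.

Lemma Kcomm_F mu i : (1 <= i <= n)%N -> Kcomm mu (Fm i) (- pair_alpha i mu).
Proof. by case: hU => _ [] _ [] _ [] h _; apply: h. Qed.

Lemma KcommE mu x z s : Kcomm mu x z -> q ^ z = s -> K mu * x = s *: (x * K mu).
Proof. by rewrite /Kcomm => -> ->. Qed.

Lemma qz0 : q ^ (0 : int) = 1. Proof. exact: expr0z. Qed.
Lemma qz1 : q ^ (1 : int) = q. Proof. exact: expr1z. Qed.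
Lemma qzN1 : q ^ (-1 : int) = q^-1. Proof. exact: exprN1. Qed.
Lemma qz2 : q ^ (2 : int) = q * q. Proof. by rewrite -exprnP expr2. Qed.
Lemma qzN2 : q ^ (-2 : int) = (q * q)^-1. Proof. by rewrite -invr_expz qz2. Qed.

Definition Echain i l := nestbr q^-1 (map E (iota i l)).
Definition Fchain i l := nestbr q (map Fm (iota i l)).
Definition Echain_rev i l := nestbr q^-1 (map E (rev (iota i l))).

Lemma Echain1 i : Echain i 1 = E i. Proof. by []. Qed.
Lemma EchainS i l : Echain i l.+2 = qbr q^-1 (E i) (Echain i.+1 l.+1). Proof. by []. Qed.
Lemma Fchain1 i : Fchain i 1 = Fm i. Proof. by []. Qed.
Lemma FchainS i l : Fchain i l.+2 = qbr q (Fm i) (Fchain i.+1 l.+1). Proof. by []. Qed.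
Lemma Echain_rev1 i : Echain_rev i 1 = E i. Proof. by []. Qed.

Lemma Echain_revS i l : Echain_rev i l.+2 = qbr q^-1 (E (i + l.+1)) (Echain_rev i l.+1).
Proof.
rewrite /Echain_rev -addn1 iotaD rev_cat /= -/(iota i l.+1).
by rewrite -addn1 iotaD rev_cat.
Qed.

Lemma Kcomm_Echain mu i l : (0 < i)%N -> (i + l <= n.+1)%N ->
  Kcomm mu (Echain i l) (\sum_(t <- iota i l) pair_alpha t mu).
Proof. by move=> hi hl; apply: Kcomm_nestbr => t; rewrite mem_iota => ht; apply: Kcomm_E; lia. Qed.

Lemma Kcomm_Echain_rev mu i l : (0 < i)%N -> (i + l <= n.+1)%N ->
  Kcomm mu (Echain_rev i l) (\sum_(t <- iota i l) pair_alpha t mu).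
Proof.
move=> hi hl; rewrite -big_rev; apply: Kcomm_nestbr => t.
by rewrite mem_rev mem_iota => ht; apply: Kcomm_E; lia.
Qed.

Lemma Kcomm_Fchain mu i l : (0 < i)%N -> (i + l <= n.+1)%N ->
  Kcomm mu (Fchain i l) (- \sum_(t <- iota i l) pair_alpha t mu).
Proof.
move=> hi hl; rewrite -sumrN; apply: Kcomm_nestbr => t.
by rewrite mem_iota => ht; apply: Kcomm_F; lia.
Qed.

(* Proves [K mu * x = s *: (x * K mu)] for a generator or chain [x] and a
   combination [mu] of simple roots, by computing the Cartan pairings and
   splitting on the relative position of the indices. *)
Ltac Kcomm_tac :=
  eapply KcommE;
  [ first [ apply: Kcomm_Echain | apply: Kcomm_Echain_rev | apply: Kcomm_Fchain
          | apply: Kcomm_E | apply: Kcomm_F ]; lia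
  | rewrite ?sum_pair_alphaN ?pair_alphaD ?pair_alphaN ?opprK;
    rewrite ?sum_pair_alpha_root ?pair_alpha_root ?pair_alpha_chain; try lia;
    rewrite ?cartan_sumE /cartan; repeat case: ifP => /= ?; try lia;
    first [exact: qz0 | exact: qz1 | exact: qzN1 | exact: qz2 | exact: qzN2] ].

Lemma F_Echain_comm j i l : (1 <= j <= n)%N -> (0 < i)%N -> (i + l <= n.+1)%N ->
  ~~ (i <= j < i + l)%N -> Fm j * Echain i l = Echain i l * Fm j.
Proof.
move=> hj hi hl hji; apply: comm_nestbr => t; rewrite mem_iota => ht.
by apply/esym/EF_comm => //; [lia | apply/eqP; lia].
Qed.

Lemma F_Echain_rev_comm j i l : (1 <= j <= n)%N -> (0 < i)%N -> (i + l <= n.+1)%N ->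
  ~~ (i <= j < i + l)%N -> Fm j * Echain_rev i l = Echain_rev i l * Fm j.
Proof.
move=> hj hi hl hji; apply: comm_nestbr => t; rewrite mem_rev mem_iota => ht.
by apply/esym/EF_comm => //; [lia | apply/eqP; lia].
Qed.

Lemma E_Fchain_comm j i l : (1 <= j <= n)%N -> (0 < i)%N -> (i + l <= n.+1)%N ->
  ~~ (i <= j < i + l)%N -> E j * Fchain i l = Fchain i l * E j.
Proof.
move=> hj hi hl hji; apply: comm_nestbr => t; rewrite mem_iota => ht.
by apply/EF_comm => //; [lia | apply/eqP; lia].
Qed.

Lemma E_Echain_comm j i l : (1 <= j <= n)%N -> (0 < i)%N -> (i + l <= n.+1)%N ->
  (j.+1 < i)%N || (i + l < j)%N -> E j * Echain i l = Echain i l * E j.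
Proof.
move=> hj hi hl hji; apply: comm_nestbr => t; rewrite mem_iota => ht.
by apply/EE_comm => //; lia.
Qed.

Lemma F_Fchain_comm j i l : (1 <= j <= n)%N -> (0 < i)%N -> (i + l <= n.+1)%N ->
  (j.+1 < i)%N || (i + l < j)%N -> Fm j * Fchain i l = Fchain i l * Fm j.
Proof.
move=> hj hi hl hji; apply: comm_nestbr => t; rewrite mem_iota => ht.
by apply/FF_comm => //; lia.
Qed.

Lemma cm_Echain_Ffirst i l : (0 < i)%N -> (i + l.+2 <= n.+1)%N ->
  cm (Echain i l.+2) (Fm i) = - (Echain i.+1 l.+1 * K (- al i)).
Proof.
move=> hi hl; rewrite EchainS; apply: cm_qbrV_lowering.
- by apply: EF_diag; lia.
- by apply/esym/F_Echain_comm; lia.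
- by Kcomm_tac.
- by Kcomm_tac.
Qed.

Lemma cm_Echain_Finner i l t : (0 < i)%N -> (i + l <= n.+1)%N -> (i < t)%N -> (t.+1 < i + l)%N ->
  cm (Echain i l) (Fm t) = 0.
Proof.
elim: l i => [|l IH] i hi hl h1 h2; first lia.
case: l IH hl h2 => [|[|l]] IH hl h2; try lia.
rewrite EchainS cm_qbr.
have -> : cm (E i) (Fm t) = 0 by rewrite /cm EF_comm ?subrr //; [lia | lia | apply/eqP; lia].
rewrite qbr0l add0r.
case: (eqVneq t i.+1) => [->|ht]; last by rewrite IH ?qbr0r //; lia.
rewrite cm_Echain_Ffirst; try lia.
by apply: qbrV_lowering0; [apply: E_Echain_comm; lia | Kcomm_tac].
Qed.

Lemma serreF_Fchain i l : (0 < i)%N -> (i + l.+2 <= n.+1)%N ->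
  Fm i * Fm i * Fchain i.+1 l.+1
  = (q + q^-1) *: (Fm i * Fchain i.+1 l.+1 * Fm i) - Fchain i.+1 l.+1 * Fm i * Fm i.
Proof.
move=> hi hl; case: l hl => [|l] hl; first by rewrite Fchain1; apply: serreF; lia.
rewrite FchainS; apply: serre_qbr_lift; first by apply: serreF; lia.
by apply: F_Fchain_comm; lia.
Qed.

Lemma F_Fchain_qcomm i l : (0 < i)%N -> (i + l.+2 <= n.+1)%N ->
  Fm i * Fchain i l.+2 = q^-1 *: (Fchain i l.+2 * Fm i).
Proof. by move=> hi hl; rewrite FchainS; apply: serre_qbr; apply: serreF_Fchain. Qed.

Lemma F_Fchain_inner_comm i l t : (0 < i)%N -> (i + l <= n.+1)%N -> (i < t)%N ->
  (t.+1 < i + l)%N -> Fm t * Fchain i l = Fchain i l * Fm t.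
Proof.
elim: l i => [|l IH] i hi hl h1 h2; first lia.
case: l IH hl h2 => [|[|l]] IH hl h2; try lia.
rewrite FchainS; case: (eqVneq t i.+1) => [->|ht].
  rewrite FchainS; apply: comm_qbr_serre.
  - by apply: serreF; lia.
  - by apply: serre_middle; apply: serreF_Fchain; lia.
  - by apply/esym/F_Fchain_comm; lia.
by apply: comm_qbr; [apply: FF_comm | apply: IH]; lia.
Qed.

Lemma Echain_shift_Fchain_comm i l : (0 < i)%N -> (i + l.+3 <= n.+1)%N ->
  Echain i.+1 l.+2 * Fchain i l.+2 = Fchain i l.+2 * Echain i.+1 l.+2.
Proof.
move=> hi hl; rewrite FchainS.
have hx0 : Echain i.+1 l.+2 * Fm i = Fm i * Echain i.+1 l.+2 by apply/esym/F_Echain_comm; lia.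
have hx1 : Echain i.+1 l.+2 * Fm i.+1
         = Fm i.+1 * Echain i.+1 l.+2 - Echain i.+2 l.+1 * K (- al i.+1).
  by apply: cm_eq; apply: cm_Echain_Ffirst; lia.
have hK0 : K (- al i.+1) * Fm i = q^-1 *: (Fm i * K (- al i.+1)) by Kcomm_tac.
have hy0 : Echain i.+2 l.+1 * Fm i = Fm i * Echain i.+2 l.+1 by apply/esym/F_Echain_comm; lia.
case: l hl hx0 hx1 hy0 => [|l] hl hx0 hx1 hy0.
  by rewrite Fchain1; exact: comm_qbr_twisted hx0 hx1 hK0 hy0.
rewrite FchainS; apply: (comm_qbr2_twisted hx0 hx1) => //.
- apply: comm_nestbr => t; rewrite mem_iota => ht.
  by apply: cm_eq0; apply: cm_Echain_Finner; lia.
- by Kcomm_tac.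
- by apply/esym/F_Fchain_comm; lia.
Qed.

Lemma EchainSr i l : (0 < i)%N -> (i + l.+2 <= n.+1)%N ->
  qbr q^-1 (Echain i l.+1) (E (i + l.+1)) = Echain i l.+2.
Proof.
elim: l i => [|l IH] i hi hl; first by rewrite Echain1 addn1.
rewrite EchainS qbr_assoc; last by apply: EE_comm; lia.
by rewrite -addSnnS IH //; lia.
Qed.

Lemma FchainSr i l : (0 < i)%N -> (i + l.+2 <= n.+1)%N ->
  qbr q (Fchain i l.+1) (Fm (i + l.+1)) = Fchain i l.+2.
Proof.
elim: l i => [|l IH] i hi hl; first by rewrite Fchain1 addn1.
rewrite FchainS qbr_assoc; last by apply: FF_comm; lia.
by rewrite -addSnnS IH //; lia.
Qed.

Lemma cm_Echain_rev_Fchain i l : (0 < i)%N -> (i + l.+1 <= n.+1)%N ->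
  cm (Echain_rev i l.+1) (Fchain i l.+1)
  = k *: (K (\sum_(t <- iota i l.+1) al t) - K (- \sum_(t <- iota i l.+1) al t)).
Proof.
move=> hi; elim: l => [|l IH] hl.
  by rewrite Echain_rev1 Fchain1 /cm big_seq1 EF_diag 1?addrAC ?subrr ?add0r //; lia.
rewrite Echain_revS -FchainSr // sum_alpha_iotaSr -K_add opprD -K_add.
apply: cm_qbrV_qbr; try by [Kcomm_tac | exact: K_comm].
- by apply: E_Fchain_comm; lia.
- by apply/esym/F_Echain_rev_comm; lia.
- by apply: EF_diag; lia.
- by apply: cm_eq; apply: IH; lia.
Qed.

Section Y.
Variables (a m : nat).
Hypotheses (ha : (2 <= a)%N) (han : (a + m + 3 <= n)%N).
Local Notation b := (a + m.+2)%N.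
Local Notation KX := (\sum_(t <- iota a.+1 m.+1) al t).
Local Notation FX := (Fchain a.+1 m.+1).
Local Notation P := (Echain a.+1 m.+2).
Local Notation Q := (qbr q^-1 (Echain_rev a.+1 m.+1) (E a)).
Local Notation LrKX := (K (al a - \sum_(t <- iota a.+1 m.+2) al t)).
Local Notation KaXbV := (K (- \sum_(t <- iota a m.+3) al t)).

Definition Bprev (c : nat -> F) := Fm a.-1 - c a.-1 *: (E b.+1 * K (- al a.-1)).

Definition Zr (c : nat -> F) :=
  qbr q (Fm a - c a *: (qbr q^-1 (Echain a.+1 m.+1) (E b) * K (- al a)))
        (qbr q FX (Fm b - c b *: (Q * K (- al b)))).

Definition Yr (c : nat -> F) (C : F) :=
  C *: (qbr q (Bprev c) (Zr c) + (q * c b) *: (Bprev c * K (al a - al b) * K (- KX))).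

Definition Z_FF := qbr q (Fm a) (qbr q FX (Fm b)).
Definition Z_FQ := qbr q (Fm a) (qbr q FX (Q * K (- al b))).
Definition Z_PF := qbr q (P * K (- al a)) (qbr q FX (Fm b)).
Definition Z_PQ := qbr q (P * K (- al a)) (qbr q FX (Q * K (- al b))).

Lemma Echain_Xb : qbr q^-1 (Echain a.+1 m.+1) (E b) = P.
Proof. by rewrite -(EchainSr (i:=a.+1) (l:=m)) ?addSnnS //; lia. Qed.

Lemma Fchain_Xb : qbr q FX (Fm b) = Fchain a.+1 m.+2.
Proof. by rewrite -(FchainSr (i:=a.+1) (l:=m)) ?addSnnS //; lia. Qed.

Lemma Zr_decomp c : Zr c = Z_FF - c b *: Z_FQ - c a *: Z_PF + (c a * c b) *: Z_PQ.
Proof. by rewrite /Zr Echain_Xb /Z_FF /Z_FQ /Z_PF /Z_PQ /qbr; nc_solve. Qed.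

Lemma qbr_FX_QK : qbr q FX (Q * K (- al b)) = E a * K (- KX) * K (- al b).
Proof.
have h1 := cm_eq (cm_Echain_rev_Fchain (i:=a.+1) (l:=m) (ltn0Sn a) ltac:(lia)).
have h2 : E a * FX = FX * E a by apply: E_Fchain_comm; lia.
have h3 : K (- al b) * FX = q^-1 *: (FX * K (- al b)) by Kcomm_tac.
have h4 : K KX * E a = q^-1 *: (E a * K KX) by Kcomm_tac.
have h5 : K (- KX) * E a = q *: (E a * K (- KX)) by Kcomm_tac.
by move: h1 h2 h3 h4 h5; rewrite /qbr; nc_solve.
Qed.

Lemma sum_alpha_Xb : \sum_(t <- iota a.+1 m.+2) al t = KX + al b.
Proof. by rewrite sum_alpha_iotaSr addSnnS. Qed.

Lemma K_Lr_KX : K (al a - al b) * K (- KX) = LrKX.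
Proof. by rewrite K_add sum_alpha_Xb opprD addrAC addrA. Qed.

Lemma K_a_KX_b : K (al a) * K (- KX) * K (- al b) = LrKX.
Proof. by rewrite !K_add sum_alpha_Xb opprD addrA. Qed.

Lemma K_aN_KX_b : K (- al a) * K (- KX) * K (- al b) = KaXbV.
Proof.
rewrite !K_add (_ : iota a m.+3 = a :: iota a.+1 m.+2) // [in RHS]big_cons.
by rewrite sum_alpha_Xb !opprD !addrA.
Qed.

Lemma Z_FQE : Z_FQ = - (k *: (LrKX - KaXbV)).
Proof.
rewrite /Z_FQ qbr_FX_QK -K_a_KX_b -K_aN_KX_b.
have h1 : E a * Fm a = Fm a * E a + k *: (K (al a) - K (- al a)) by apply: EF_diag; lia.
have h2 : K (- KX) * Fm a = q^-1 *: (Fm a * K (- KX)) by Kcomm_tac.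
have h3 : K (- al b) * Fm a = 1 *: (Fm a * K (- al b)) by Kcomm_tac.
by move: h1 h2 h3; rewrite /qbr; nc_solve.
Qed.

Lemma sum_pair_alpha_KX : \sum_(t <- iota a.+1 m.+2) pair_alpha t (- KX) = -1.
Proof.
rewrite sum_pair_alphaN.
have -> : \sum_(t <- iota a.+1 m.+2) pair_alpha t KX
        = \sum_(t <- iota a.+1 m.+2) cartan_sum t a.+1 m.+1.
  rewrite big_seq_cond [RHS]big_seq_cond; apply: eq_bigr => t.
  by rewrite andbT mem_iota => ht; apply: pair_alpha_chain; lia.
rewrite (iotaSr a.+1 m.+1) big_cat big_seq1 cartan_sum_chain cartan_sumE.
by repeat case: ifP => /= ?; try lia.
Qed.

Lemma Z_PQE : Z_PQ = - (q^-1 *: (Echain a m.+3 * KaXbV)).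
Proof.
rewrite /Z_PQ qbr_FX_QK -K_aN_KX_b [Echain a m.+3]EchainS.
have h1 : K (- al a) * E a = (q * q)^-1 *: (E a * K (- al a)) by Kcomm_tac.
have h2 : K (- KX) * P = q^-1 *: (P * K (- KX)).
  by apply: KcommE qzN1; rewrite /Kcomm -sum_pair_alpha_KX; apply: Kcomm_Echain; lia.
have h3 : K (- al b) * P = q^-1 *: (P * K (- al b)) by Kcomm_tac.
have h4 : K (- KX) * K (- al a) = K (- al a) * K (- KX) by apply: K_comm.
have h5 : K (- al b) * K (- al a) = K (- al a) * K (- al b) by apply: K_comm.
by move: h1 h2 h3 h4 h5; rewrite /qbr; nc_solve.
Qed.

Lemma Z_FF_F_comm t : (a < t < b)%N -> Z_FF * Fm t = Fm t * Z_FF.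
Proof.
move=> ht; rewrite /Z_FF Fchain_Xb -FchainS.
by apply/esym/F_Fchain_inner_comm; lia.
Qed.

Lemma Z_PQ_F_comm t : (a < t < b)%N -> Z_PQ * Fm t = Fm t * Z_PQ.
Proof.
move=> ht; rewrite Z_PQE.
have h1 : Echain a m.+3 * Fm t = Fm t * Echain a m.+3.
  by apply: cm_eq0; apply: cm_Echain_Finner; lia.
have h2 : KaXbV * Fm t = 1 *: (Fm t * KaXbV) by Kcomm_tac.
by move: h1 h2; nc_solve.
Qed.

Lemma Bprev_F_comm c t : (a < t < b)%N -> Bprev c * Fm t = Fm t * Bprev c.
Proof.
move=> ht.
have h1 : Fm a.-1 * Fm t = Fm t * Fm a.-1 by apply: FF_comm; lia.
have h2 : E b.+1 * Fm t = Fm t * E b.+1 by apply: EF_comm; [lia | lia | apply/eqP; lia].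
have h3 : K (- al a.-1) * Fm t = 1 *: (Fm t * K (- al a.-1)) by Kcomm_tac.
by rewrite /Bprev; move: h1 h2 h3; nc_solve.
Qed.

Local Notation Fp := (Fm a.+1).
Local Notation FXb := (Fchain a.+1 m.+2).
Local Notation V := (cm Z_PF Fp).

Lemma Z_PFE : Z_PF = qbr q (P * K (- al a)) FXb.
Proof. by rewrite /Z_PF Fchain_Xb. Qed.

Lemma Fprev_V_qcomm : Fm a.-1 * V = q *: (V * Fm a.-1).
Proof.
rewrite Z_PFE.
have h1 : P * Fm a.-1 = Fm a.-1 * P by apply/esym/F_Echain_comm; lia.
have h2 : K (- al a) * Fm a.-1 = q^-1 *: (Fm a.-1 * K (- al a)) by Kcomm_tac.
have h3 : FXb * Fm a.-1 = Fm a.-1 * FXb by apply/esym/F_Fchain_comm; lia.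
have h4 : Fp * Fm a.-1 = Fm a.-1 * Fp by apply: FF_comm; lia.
by move: h1 h2 h3 h4; rewrite /cm /qbr; nc_solve.
Qed.

Lemma Enext_V_qcomm :
  E b.+1 * K (- al a.-1) * V = q *: (V * (E b.+1 * K (- al a.-1))).
Proof.
rewrite Z_PFE.
have r1 : E b.+1 * P = q *: (P * E b.+1) - q *: Echain a.+1 m.+3.
  by apply: qbrV_eq; rewrite -(EchainSr (i:=a.+1) (l:=m.+1)) //; lia.
have r2 : E b.+1 * K (- al a) = K (- al a) * E b.+1.
  by apply/esym; rewrite -[RHS]scale1r; Kcomm_tac.
have r3 : E b.+1 * FXb = FXb * E b.+1 by apply: E_Fchain_comm; lia.
have r4 : E b.+1 * Fp = Fp * E b.+1 by apply: EF_comm; [lia | lia | apply/eqP; lia].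
have k1 : K (- al a.-1) * P = 1 *: (P * K (- al a.-1)) by Kcomm_tac.
have k2 : K (- al a.-1) * Echain a.+1 m.+3 = 1 *: (Echain a.+1 m.+3 * K (- al a.-1)).
  by Kcomm_tac.
have k3 : K (- al a.-1) * K (- al a) = K (- al a) * K (- al a.-1) by apply: K_comm.
have k4 : K (- al a.-1) * FXb = 1 *: (FXb * K (- al a.-1)) by Kcomm_tac.
have k5 : K (- al a.-1) * Fp = 1 *: (Fp * K (- al a.-1)) by Kcomm_tac.
have k6 : K (- al a.-1) * Echain a.+2 m.+2 = 1 *: (Echain a.+2 m.+2 * K (- al a.-1)).
  by Kcomm_tac.
have k7 : K (- al a.-1) * K (- al a.+1) = K (- al a.+1) * K (- al a.-1) by apply: K_comm.
have g1 : Echain a.+1 m.+3 * Fp = Fp * Echain a.+1 m.+3 - Echain a.+2 m.+2 * K (- al a.+1).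
  by apply: cm_eq; apply: cm_Echain_Ffirst; lia.
have g2 : K (- al a) * Fp = q^-1 *: (Fp * K (- al a)) by Kcomm_tac.
have g3 : FXb * Fp = q *: (Fp * FXb) by apply: scale_qV_eq; apply: F_Fchain_qcomm; lia.
have g4 : Echain a.+2 m.+2 * FXb = FXb * Echain a.+2 m.+2.
  by apply: Echain_shift_Fchain_comm; lia.
have g5 : K (- al a.+1) * FXb = q *: (FXb * K (- al a.+1)) by Kcomm_tac.
have g6 : K (- al a) * FXb = q^-1 *: (FXb * K (- al a)) by Kcomm_tac.
have g7 : K (- al a) * Echain a.+2 m.+2 = Echain a.+2 m.+2 * K (- al a).
  by rewrite -[RHS]scale1r; Kcomm_tac.
have g8 : K (- al a.+1) * K (- al a) = K (- al a) * K (- al a.+1) by apply: K_comm.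
have g9 : Echain a.+2 m.+2 * Fp = Fp * Echain a.+2 m.+2 by apply/esym/F_Echain_comm; lia.
have g10 : K (- al a.+1) * Fp = (q * q) *: (Fp * K (- al a.+1)) by Kcomm_tac.
move: r1 r2 r3 r4 k1 k2 k3 k4 k5 k6 k7 g1 g2 g3 g4 g5 g6 g7 g8 g9 g10.
by rewrite /cm /qbr; nc_solve.
Qed.

Lemma Bprev_V_qcomm c : Bprev c * V = q *: (V * Bprev c).
Proof. by rewrite /Bprev; move: Fprev_V_qcomm Enext_V_qcomm; nc_solve. Qed.

Lemma LrKX_Bprev_qcomm c : LrKX * Bprev c = q *: (Bprev c * LrKX).
Proof.
have h1 : LrKX * Fm a.-1 = q *: (Fm a.-1 * LrKX) by Kcomm_tac.
have h2 : LrKX * E b.+1 = q *: (E b.+1 * LrKX) by Kcomm_tac.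
have h3 : LrKX * K (- al a.-1) = K (- al a.-1) * LrKX by apply: K_comm.
by rewrite /Bprev; move: h1 h2 h3; nc_solve.
Qed.

Lemma Zr_Ffirst c : Zr c * Fp = Fp * Zr c + (c b * q) *: (Fp * LrKX) - c a *: V.
Proof.
have hFF : Z_FF * Fp = Fp * Z_FF by apply: Z_FF_F_comm; lia.
have hPQ : Z_PQ * Fp = Fp * Z_PQ by apply: Z_PQ_F_comm; lia.
have hPF : Z_PF * Fp = Fp * Z_PF + V by rewrite /cm addrC subrK.
have hFQ : Z_FQ * Fp = Fp * Z_FQ - q *: (Fp * LrKX).
  have h1 : LrKX * Fp = (q * q) *: (Fp * LrKX) by Kcomm_tac.
  have h2 : KaXbV * Fp = 1 *: (Fp * KaXbV) by Kcomm_tac.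
  by rewrite Z_FQE; move: h1 h2; nc_solve.
by rewrite Zr_decomp; move: hFF hFQ hPF hPQ; nc_solve.
Qed.

Lemma Yr_Ffirst c C : cm (Yr c C) Fp = 0.
Proof.
have hB : Bprev c * Fp = Fp * Bprev c by apply: Bprev_F_comm; lia.
have hKF : LrKX * Fp = (q * q) *: (Fp * LrKX) by Kcomm_tac.
rewrite [LHS]/cm /Yr /qbr.
by move: (Zr_Ffirst c) (Bprev_V_qcomm c) hB (LrKX_Bprev_qcomm c) hKF K_Lr_KX; nc_solve.
Qed.

Local Notation Fl := (Fm (a + m.+1)).

Lemma Zr_Flast c : (1 <= m)%N -> Zr c * Fl = Fl * Zr c.
Proof.
move=> hm.
have hFF : Z_FF * Fl = Fl * Z_FF by apply: Z_FF_F_comm; lia.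
have hPQ : Z_PQ * Fl = Fl * Z_PQ by apply: Z_PQ_F_comm; lia.
have hFQ : Z_FQ * Fl = Fl * Z_FQ.
  have h1 : LrKX * Fl = 1 *: (Fl * LrKX) by Kcomm_tac.
  have h2 : KaXbV * Fl = 1 *: (Fl * KaXbV) by Kcomm_tac.
  by rewrite Z_FQE; move: h1 h2; nc_solve.
have hPF : Z_PF * Fl = Fl * Z_PF.
  have h1 : P * Fl = Fl * P by apply: cm_eq0; apply: cm_Echain_Finner; lia.
  have h2 : K (- al a) * Fl = 1 *: (Fl * K (- al a)) by Kcomm_tac.
  have h3 : FXb * Fl = Fl * FXb by apply/esym/F_Fchain_inner_comm; lia.
  by rewrite Z_PFE; move: h1 h2 h3; rewrite /qbr; nc_solve.
by rewrite Zr_decomp; move: hFF hFQ hPF hPQ; nc_solve.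
Qed.

Lemma Yr_Flast c C : (1 <= m)%N -> cm (Yr c C) Fl = 0.
Proof.
move=> hm.
have hB : Bprev c * Fl = Fl * Bprev c by apply: Bprev_F_comm; lia.
have hKF : LrKX * Fl = 1 *: (Fl * LrKX) by Kcomm_tac.
rewrite /cm /Yr /qbr.
by move: (Zr_Flast c hm) hB hKF K_Lr_KX; nc_solve.
Qed.
End Y.
End Uq.

Lemma generic_q_nonzero (Kf Fk : fieldType) (iota : {rmorphism Kf -> Fk}) (q : Fk) :
  (forall p : {poly Kf}, p != 0 -> (map_poly iota p).[q] != 0) ->
  [/\ q != 0, q * q - 1 != 0 & q * q + 1 != 0].
Proof.
move=> hq.
have X2_neq0 (c : Kf) : ('X^2 + c%:P : {poly Kf}) != 0.
  apply/eqP => /(congr1 (fun p : {poly Kf} => p`_2)).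
  by rewrite coefD coefXn coefC /= addr0 coef0 => /eqP; rewrite oner_eq0.
have evalX2 (c : Kf) : (map_poly iota ('X^2 + c%:P)).[q] = q * q + iota c.
  by rewrite rmorphD /= map_polyXn map_polyC /= hornerD hornerXn hornerC expr2.
split.
- by have := hq 'X; rewrite polyX_eq0 map_polyX hornerX; exact.
- by have := hq _ (X2_neq0 (-1)); rewrite evalX2 rmorphN rmorph1.
- by have := hq _ (X2_neq0 1); rewrite evalX2 rmorph1.
Qed.

Theorem lemma4p3
  (* base field K of characteristic zero, embedded in K' = F *)
  (Kf : fieldType) (Fk : fieldType) (iota : {rmorphism Kf -> Fk})
  (hchar : [pchar Kf] =i pred0)
  (* q indeterminate over K, s = q^{1/2} in K' *)
  (q s : Fk) (hs : s ^+ 2 = q)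
  (hq : forall p : {poly Kf}, p != 0 -> (map_poly iota p).[q] != 0)
  (n r : nat) (hr2 : (2 <= r)%N) (hrn : (r <= uphalf n - 1)%N)
  (* parameters c_i, i in I \ X *)
  (c : nat -> Fk)
  (hcK : forall i, (1 <= i <= n)%N -> ~~ (r < i <= n - r)%N ->
          c i != 0 /\ in_adjoin iota s (c i))
  (hcsq : forall i, (1 <= i <= n)%N -> ~~ (r < i <= n - r)%N ->
          exists d : Fk, d ^+ 2 = c i)
  (hctau : forall i, (1 <= i <= n)%N -> ~~ (r <= i <= n - r + 1)%N ->
          c i = c (tau n i))
  (* C = (q c_r c_{tau r})^{-1/2} *)
  (C : Fk) (hC : C ^+ 2 * (q * c r * c (tau n r)) = 1)
  (* any K'-algebra with generators satisfying the relations of U_q(sl_{n+1}) *)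
  (A : algType Fk) (E Fm : nat -> A) (K : weight n -> A)
  (hU : Uq_relations q E Fm K) :
  let Y := Yelt r q E Fm K c C in
  Y * Fm r.+1 - Fm r.+1 * Y = 0 /\ Y * Fm (n - r)%N - Fm (n - r)%N * Y = 0.
Proof.
have [hq0 hqq hqp] := generic_q_nonzero hq.
have hrX : (r.+1 + r.+1 <= n.+1)%N by rewrite addnn -geq_uphalf_double; lia.
have [m hX] : exists m, (n - r - r = m.+1)%N by exists (n - r - r).-1; lia.
have hb : tau n r = (r + m.+2)%N by rewrite /tau; lia.
have hb1 : tau n r.-1 = (r + m.+2).+1%N by rewrite /tau; lia.
have hY : Yelt r q E Fm K c C = Yr q E Fm K r m c C.
  by rewrite /Yelt /Bgen /Br /Btr /Kinv /Lr /KXinv /EXp /EXm /FXp /Xlist hb hb1 hX.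
have hrm : (r + m + 3 <= n)%N by lia.
move=> Y; rewrite /Y hY; split; first exact: Yr_Ffirst.
rewrite (_ : n - r = r + m.+1)%N; last by lia.
have [m0|hm] := eqVneq m 0%N; first by subst m; rewrite addn1; exact: Yr_Ffirst.
by apply: Yr_Flast => //; lia.
Qed.
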